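(* For every $C>0$, the optimal solution $w^*_C$ lies in the closed Euclidean ball $$\Big\| w^*_C - \tfrac12\Big(\hat w - \tfrac{C}{\tilde C}(g-\hat w)\Big)\Big\|^2 \le \Big(\tfrac12\Big\|\hat w + \tfrac{C}{\tilde C}(g-\hat w)\Big\|\Big)^2 .$$
   Context: Let $\{(x_i,y_i)\}_{i=1}^n\subset\mathbb R^d\times\{-1,1\}$ be a training set. Let $\ell:\{-1,1\}\times\mathbb R\to\mathbb R$ be convex in its second argument, and set $\ell_i(w):=\ell(y_i,w^\top x_i)$ for $w\in\mathbb R^d$ (a convex function on $\mathbb R^d$). For $C>0$ let $w^*_C$ be the (unique) minimizer over $w\in\mathbb R^d$ of $P_C(w)=\frac12\|w\|^2+C\sum_{i=1}^n\ell_i(w)$, where $\|\cdot\|$ is the Euclidean norm. Fix $\tilde C>0$ and an arbitrary vector $\hat w\in\mathbb R^d$ (an approximate solution for $\tilde C$); for each $i$ let $\xi_i\in\partial\ell_i(\hat w)$ be any subgradient of $\ell_i$ at $\hat w$, and set $g:=\hat w+\tilde C\sum_{i=1}^n\xi_i$ (a subgradient of $P_{\tilde C}$ at $\hat w$). *)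

From HB Require Import structures.
From mathcomp Require Import all_boot all_order all_algebra.
Set Implicit Arguments. Unset Strict Implicit. Unset Printing Implicit Defensive.
Import Order.TTheory GRing.Theory Num.Theory.
Local Open Scope ring_scope.

Definition dotv (R : rcfType) (d : nat) (u v : 'rV[R]_d) : R :=
  \sum_(k < d) u 0 k * v 0 k.

Definition normv (R : rcfType) (d : nat) (u : 'rV[R]_d) : R :=
  Num.sqrt (dotv u u).

Definition convex_fun (R : rcfType) (f : R -> R) : Prop :=
  forall a b t : R, 0 <= t -> t <= 1 ->
    f (t * a + (1 - t) * b) <= t * f a + (1 - t) * f b.

Definition is_subgradient (R : rcfType) (d : nat) (f : 'rV[R]_d -> R)
  (w xi : 'rV[R]_d) : Prop :=
  forall v : 'rV[R]_d, f w + dotv xi (v - w) <= f v.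

Definition loss_i (R : rcfType) (d n : nat) (ell : R -> R -> R)
  (x : 'I_n -> 'rV[R]_d) (y : 'I_n -> R) (i : 'I_n) (w : 'rV[R]_d) : R :=
  ell (y i) (dotv w (x i)).

Definition primal (R : rcfType) (d n : nat) (ell : R -> R -> R)
  (x : 'I_n -> 'rV[R]_d) (y : 'I_n -> R) (C : R) (w : 'rV[R]_d) : R :=
  2^-1 * normv w ^+ 2 + C * \sum_(i < n) loss_i ell x y i w.

(* Write s for the sum of the subgradients xi_i and L for the total loss, so
   that (C / Ct) (g - what) = C s, and let w = wstar.  The subgradient
   inequality gives L w >= L what + <s, w - what>, and first-order optimality
   of w gives C (L w - L what) <= <w, what - w>.  Together they yield
   <w - what, w + C s> <= 0: w lies in the closed ball whose diameter is the
   segment from what to -C s, which is exactly the claimed ball. *)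
From HB Require Import structures.
From mathcomp Require Import all_boot all_order all_algebra.
From mathcomp Require Import ring lra.
Import Order.TTheory GRing.Theory Num.Theory.
Local Open Scope ring_scope.

Lemma ler_of_forall_slack (R : realFieldType) (a b k : R) :
  0 <= k -> (forall t, 0 < t -> t <= 1 -> a <= b + t * k) -> a <= b.
Proof.
move=> k0 hab; apply/ler_addgt0Pr => e e0.
have ek0 : 0 < e + k by lra.
have t0 : 0 < e / (e + k) by rewrite divr_gt0.
have t1 : e / (e + k) <= 1 by rewrite ler_pdivrMr // mul1r; lra.
apply: (le_trans (hab _ t0 t1)); rewrite lerD2l mulrAC ler_pdivrMr //.
by nra.
Qed.

Section InnerProduct.
Context {R : rcfType} {d : nat}.
Implicit Types u v w : 'rV[R]_d.

Lemma dotvC u v : dotv u v = dotv v u.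
Proof. by apply: eq_bigr => k _; rewrite mulrC. Qed.

Lemma dotvDl u v w : dotv (u + v) w = dotv u w + dotv v w.
Proof. by rewrite /dotv -big_split; apply: eq_bigr => k _; rewrite mxE mulrDl. Qed.

Lemma dotvZl a u v : dotv (a *: u) v = a * dotv u v.
Proof. by rewrite /dotv mulr_sumr; apply: eq_bigr => k _; rewrite mxE mulrA. Qed.

Lemma dotvNl u v : dotv (- u) v = - dotv u v.
Proof. by rewrite -scaleN1r dotvZl mulN1r. Qed.

Lemma dotvBl u v w : dotv (u - v) w = dotv u w - dotv v w.
Proof. by rewrite dotvDl dotvNl. Qed.

Lemma dotvDr u v w : dotv w (u + v) = dotv w u + dotv w v.
Proof. by rewrite dotvC dotvDl !(dotvC w). Qed.

Lemma dotvZr a u v : dotv v (a *: u) = a * dotv v u.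
Proof. by rewrite dotvC dotvZl dotvC. Qed.

Lemma dotvNr u v : dotv v (- u) = - dotv v u.
Proof. by rewrite dotvC dotvNl dotvC. Qed.

Lemma dotvBr u v w : dotv w (u - v) = dotv w u - dotv w v.
Proof. by rewrite dotvDr dotvNr. Qed.

Lemma dotv_suml n (f : 'I_n -> 'rV[R]_d) v :
  dotv (\sum_(i < n) f i) v = \sum_(i < n) dotv (f i) v.
Proof.
have dotv0l : dotv 0 v = 0 by rewrite -(scale0r 0) dotvZl mul0r.
exact: (big_morph (fun u => dotv u v) (fun u w => dotvDl u w v) dotv0l).
Qed.

Lemma dotvv_ge0 u : 0 <= dotv u u.
Proof. by apply: sumr_ge0 => k _; rewrite -expr2 sqr_ge0. Qed.

Lemma normv2 u : normv u ^+ 2 = dotv u u.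
Proof. by rewrite /normv sqr_sqrtr // dotvv_ge0. Qed.

Lemma normvZ2 a u : normv (a *: u) ^+ 2 = a ^+ 2 * normv u ^+ 2.
Proof. by rewrite !normv2 dotvZl dotvZr mulrA -expr2. Qed.

Lemma normvD2 u v :
  normv (u + v) ^+ 2 = normv u ^+ 2 + 2 * dotv u v + normv v ^+ 2.
Proof. by rewrite !normv2 !(dotvDl, dotvDr) (dotvC v u); ring. Qed.

Lemma normv_sub_midpoint w a b :
  normv (w - 2^-1 *: (a + b)) ^+ 2
    = (2^-1 * normv (a - b)) ^+ 2 + dotv (w - a) (w - b).
Proof.
rewrite exprMn !normv2 !(dotvDl, dotvDr, dotvNl, dotvNr, dotvZl, dotvZr).
rewrite (dotvC a w) (dotvC b w) (dotvC b a).
by field.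
Qed.

(* Thales: the closed ball with diameter [a, b]. *)
Lemma dotv_le0_in_diameter_ball w a b :
  dotv (w - a) (w - b) <= 0 ->
  normv (w - 2^-1 *: (a + b)) ^+ 2 <= (2^-1 * normv (a - b)) ^+ 2.
Proof. by move=> h; rewrite normv_sub_midpoint gerDl. Qed.

Definition convex_vfun (f : 'rV[R]_d -> R) : Prop :=
  forall u v t, 0 <= t -> t <= 1 ->
    f (u + t *: (v - u)) <= (1 - t) * f u + t * f v.

Lemma convex_vfun_sum n (f : 'I_n -> 'rV[R]_d -> R) :
  (forall i, convex_vfun (f i)) -> convex_vfun (fun w => \sum_(i < n) f i w).
Proof.
move=> hf u v t t0 t1; rewrite !mulr_sumr -big_split /=.
by apply: ler_sum => i _; exact: hf.
Qed.

Lemma convex_vfun_comp_dotv (h : R -> R) (z : 'rV[R]_d) :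
  convex_fun h -> convex_vfun (fun w => h (dotv w z)).
Proof.
move=> hh u v t t0 t1.
have -> : dotv (u + t *: (v - u)) z = t * dotv v z + (1 - t) * dotv u z.
  by rewrite dotvDl dotvZl dotvBl; ring.
by rewrite [_ + t * _]addrC; exact: hh.
Qed.

(* First-order optimality of a minimizer of 1/2 |w|^2 + C f(w): the
   one-sided derivative at w along v - w is nonnegative. *)
Lemma regularized_min_variational (f : 'rV[R]_d -> R) (C : R) w v :
  convex_vfun f -> 0 <= C ->
  (forall u, 2^-1 * normv w ^+ 2 + C * f w <= 2^-1 * normv u ^+ 2 + C * f u) ->
  C * (f w - f v) <= dotv w (v - w).
Proof.
move=> hf C0 hmin.
apply: (@ler_of_forall_slack _ _ _ (2^-1 * normv (v - w) ^+ 2)).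
  by rewrite mulr_ge0 // ?invr_ge0 ?sqr_ge0.
move=> t t0 t1.
have hconv : C * f (w + t *: (v - w)) <= C * ((1 - t) * f w + t * f v).
  by rewrite ler_wpM2l // hf // ltW.
have := hmin (w + t *: (v - w)).
rewrite normvD2 dotvZr normvZ2 => hm.
rewrite -(ler_pM2l t0); nra.
Qed.

End InnerProduct.

Theorem mainTheorem1 (R : rcfType) (d n : nat)
  (x : 'I_n -> 'rV[R]_d) (y : 'I_n -> R)
  (hy : forall i, y i = 1 \/ y i = -1)
  (ell : R -> R -> R)
  (hconv : forall s : R, s = 1 \/ s = -1 -> convex_fun (ell s))
  (Ct : R) (hCt : 0 < Ct)
  (what : 'rV[R]_d) (xi : 'I_n -> 'rV[R]_d)
  (hxi : forall i, is_subgradient (loss_i ell x y i) what (xi i))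
  (C : R) (hC : 0 < C)
  (wstar : 'rV[R]_d)
  (hmin : forall w : 'rV[R]_d, primal ell x y C wstar <= primal ell x y C w) :
  let g := what + Ct *: \sum_(i < n) xi i in
  normv (wstar - 2^-1 *: (what - (C / Ct) *: (g - what))) ^+ 2
    <= (2^-1 * normv (what + (C / Ct) *: (g - what))) ^+ 2.
Proof.
rewrite /=; set s := \sum_(i < n) xi i.
set L := fun w => \sum_(i < n) loss_i ell x y i w.
have -> : (C / Ct) *: (what + Ct *: s - what) = C *: s.
  by rewrite addrC addKr scalerA mulrVK // unitfE gt_eqF.
have hsub : L what + dotv s (wstar - what) <= L wstar.
  by rewrite /L /s dotv_suml -big_split /=; apply: ler_sum => i _; exact: hxi.
have hopt : C * (L wstar - L what) <= dotv wstar (what - wstar).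
  apply: regularized_min_variational (ltW hC) hmin.
  by apply: convex_vfun_sum => i; apply: convex_vfun_comp_dotv; exact: hconv.
have -> : what + C *: s = what - - (C *: s) by rewrite opprK.
apply: dotv_le0_in_diameter_ball.
rewrite opprK dotvDr dotvZr !dotvBl (dotvC what wstar).
rewrite dotvBr in hopt; rewrite dotvC dotvBl in hsub; nra.
Qed.
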